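(* For all $\ell\in[n]$ and $r\in\{1,\dots,k\}$, $$\mathbb{E}[v(\mathrm{ALG}^{\ge\ell}_r)]\ \ge\ \frac{1}{\ell}\Big(\mathbb{E}[v(\mathcal{A}(U^{\le\ell}))]+(k-1)\,\mathbb{E}[v(\mathrm{ALG}^{\ge\ell+1}_{r-1})]+(\ell-k)\,\mathbb{E}[v(\mathrm{ALG}^{\ge\ell+1}_{r})]\Big).$$
   Context: Submodular secretary setting. Let $U$ be a finite ground set of $n$ items and $k\ge1$ an integer. Let $v\colon 2^U\to\mathbb{R}_{\ge0}$ be monotone and submodular. The items arrive one per round (rounds $1,\dots,n$) in a uniformly random order; for $\ell\in[n]$, $U^{\le \ell}$ denotes the set of items arriving in rounds $1,\dots,\ell$. $\mathcal{A}$ is an offline algorithm that, for every $L\subseteq U$, returns a set $\mathcal{A}(L)\subseteq L$ with $|\mathcal{A}(L)|\le k$ and $v(\mathcal{A}(L))\ge \alpha\max\{v(T):T\subseteq L,|T|\le k\}$, where $\alpha\in(0,1]$; $\mathcal{A}(L)$ depends only on the set $L$. Random sets $\mathrm{ALG}^{\ge\ell}_r\subseteq U$ for $\ell\in\{1,\dots,n+1\}$, $r\in\{0,\dots,k\}$ are defined recursively: $\mathrm{ALG}^{\ge\ell}_0=\emptyset$ for all $\ell$, $\mathrm{ALG}^{\ge n+1}_r=\emptyset$ for all $r$, and for $\ell\in[n]$, $r\ge1$, letting $j$ be the item arriving in round $\ell$: $\mathrm{ALG}^{\ge\ell}_r=\{j\}\cup\mathrm{ALG}^{\ge\ell+1}_{r-1}$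 if $j\in\mathcal{A}(U^{\le\ell})$, and $\mathrm{ALG}^{\ge\ell}_r=\mathrm{ALG}^{\ge\ell+1}_{r}$ otherwise. (Thus $\mathrm{ALG}^{\ge\ell}_r$ is the set of the first $r$ items a run of the selection rule ''accept the arriving item if it lies in $\mathcal{A}(U^{\le\ell})$ and capacity remains'' would accept if started in round $\ell$ with remaining capacity $r$.) *)

From HB Require Import structures.
From mathcomp Require Import all_boot all_order all_algebra all_fingroup.
Set Implicit Arguments. Unset Strict Implicit. Unset Printing Implicit Defensive.
Import Order.TTheory GRing.Theory Num.Theory.
Local Open Scope ring_scope.

Section Secretary.
Variable U : finType.

(* A uniformly random arrival order is a uniformly random permutation
   sigma of U; the item arriving in round i (1-based) is the i-th entry of
   [arrival sigma] = map sigma (enum U). *)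
Definition arrival (sigma : {perm U}) : seq U := map sigma (enum U).

Definition prefixSet (sigma : {perm U}) (l : nat) : {set U} :=
  [set x in take l (arrival sigma)].

(* Run of the selection rule: [pre] = items that arrived before, [suf] =
   items still to arrive (in order), r = remaining capacity. *)
Fixpoint algRun (A : {set U} -> {set U}) (pre suf : seq U) (r : nat)
  : {set U} :=
  match suf with
  | [::] => set0
  | j :: suf' =>
      match r with
      | 0%N => set0
      | r'.+1 =>
          let pre' := rcons pre j in
          if j \in A [set x in pre'] then j |: algRun A pre' suf' r'
          else algRun A pre' suf' r
      end
  end.

(* ALG^{>= l}_r for the arrival order sigma, l in {1,..,n+1} *)
Definition ALG (A : {set U} -> {set U}) (sigma : {perm U}) (l r : nat)
  : {set U} :=
  algRun A (take l.-1 (arrival sigma)) (drop l.-1 (arrival sigma)) r.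

Definition Exp (R : numFieldType) (f : {perm U} -> R) : R :=
  (\sum_(sigma : {perm U}) f sigma) / (#|{perm U}|)%:R.

End Secretary.

From HB Require Import structures.
From mathcomp Require Import all_boot all_order all_algebra all_fingroup.
From mathcomp Require Import lra.
Set Implicit Arguments. Unset Strict Implicit. Unset Printing Implicit Defensive.
Import Order.TTheory GRing.Theory Num.Theory.
Local Open Scope ring_scope.

(* Left multiplication of the arrival order by the transposition of the items
   arriving in rounds i+1 and l is a bijection, so E[v(ALG^{>=l}_r)] is the
   average over i < l of these swapped runs.  A swap leaves the prefix set
   L = U^{<=l} and the later arrivals unchanged and only moves the i-th item x
   to round l; the run from round l then yields x |: B if x \in A(L) and C
   otherwise, where B = ALG^{>=l+1}_{r-1} \subset C = ALG^{>=l+1}_r.  Summing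
   over x \in L, submodularity gives
     \sum_(x in A(L)) v(x |: B) >= v(A(L) :|: B) + (#|A(L)| - 1) v(B),
   and monotonicity with #|A(L)| <= k turns the total into the bound. *)

Section MonotoneSubmodular.
Variables (U : finType) (R : realDomainType) (v : {set U} -> R).
Hypothesis v_mono : forall S T : {set U}, S \subset T -> v S <= v T.
Hypothesis v_submod :
  forall S T : {set U}, v (S :|: T) + v (S :&: T) <= v S + v T.

Lemma submod_sum_setU1 (S B : {set U}) :
  v (S :|: B) + (#|S|%:R - 1) * v B <= \sum_(x in S) v (x |: B).
Proof.
move: {2}#|S| (erefl #|S|) => n; elim: n S => [|n IH] S cS.
  by move/eqP: cS; rewrite cards_eq0 => /eqP->; rewrite big_set0 set0U cards0; lra.
have [x xS] : exists x, x \in S by apply/card_gt0P; rewrite cS.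
have cSx : #|S :\ x| = n by move: cS; rewrite (cardsD1 x S) xS add1n => -[].
have IHx := IH _ cSx; rewrite cSx in IHx.
rewrite (big_setD1 x xS) /= cS -addn1 natrD.
have := v_submod (x |: B) ((S :\ x) :|: B).
have -> : (x |: B) :|: ((S :\ x) :|: B) = S :|: B.
  by rewrite setUACA setUid setD1K.
have : v B <= v ((x |: B) :&: ((S :\ x) :|: B)).
  by apply: v_mono; rewrite subsetI !subsetUr.
lra.
Qed.

Lemma sum_marginals_ge (L S B C : {set U}) (k : nat) :
  S \subset L -> (#|S| <= k)%N -> B \subset C ->
  v S + (k%:R - 1) * v B + (#|L|%:R - k%:R) * v C
    <= \sum_(x in L) (if x \in S then v (x |: B) else v C).
Proof.
move=> SL Sk BC.
rewrite (bigID (mem S)) /=.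
have -> : \sum_(x in L | x \in S) (if x \in S then v (x |: B) else v C)
          = \sum_(x in S) v (x |: B).
  apply: eq_big => [x | x /andP[_ ->]] //.
  by rewrite andb_idl // => /(subsetP SL).
have -> : \sum_(x in L | x \notin S) (if x \in S then v (x |: B) else v C)
          = #|L :\: S|%:R * v C.
  rewrite mulr_natl -sumr_const; apply: eq_big => [x | x /andP[_ /negbTE->]] //.
  by rewrite !inE andbC.
have cLS : #|L :\: S|%:R = #|L|%:R - #|S|%:R :> R.
  by rewrite (cardsD L S) (setIidPr SL) natrB // subset_leq_card.
have := submod_sum_setU1 S B.
have : v S <= v (S :|: B) by apply: v_mono; rewrite subsetUl.
have : v B <= v C by exact: v_mono.
have : #|S|%:R <= k%:R :> R by rewrite ler_nat.
rewrite cLS; nra.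
Qed.

End MonotoneSubmodular.

Section Transpositions.
Variable T : finType.
Implicit Types (a b : T) (s : seq T).

Lemma map_tperm_id a b s : a \notin s -> b \notin s -> map (tperm a b) s = s.
Proof.
move=> aNs bNs; apply: map_id_in => x xs.
by rewrite tpermD //; [apply: contraNneq aNs | apply: contraNneq bNs] => ->.
Qed.

Lemma mem_map_tperm a b s : a \in s -> b \in s -> map (tperm a b) s =i s.
Proof.
move=> aS bS x; rewrite -{1}(tpermK a b x) mem_map; last exact: perm_inj.
by case: tpermP => [->|->|//]; rewrite aS bS.
Qed.

End Transpositions.

Section Run.
Variables (U : finType) (A : {set U} -> {set U}).
Implicit Types (s : {perm U}) (l r : nat).

Lemma algRun_eq_pre (pre1 pre2 suf : seq U) r :
  [set x in pre1] = [set x in pre2] -> algRun A pre1 suf r = algRun A pre2 suf r.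
Proof.
elim: suf pre1 pre2 r => [|j suf IH] pre1 pre2 [|r] //= E.
have E' : [set x in rcons pre1 j] = [set x in rcons pre2 j].
  by apply/setP => y; move/setP/(_ y): E; rewrite !inE !mem_rcons !in_cons => ->.
by rewrite E' !(IH _ _ _ E').
Qed.

Lemma algRun_subS (pre suf : seq U) r :
  algRun A pre suf r \subset algRun A pre suf r.+1.
Proof.
elim: suf pre r => [|j suf IH] pre [|r] //=; rewrite ?sub0set //.
by case: ifP => _; rewrite ?setUS.
Qed.

Lemma ALG_subS s l r : ALG A s l r \subset ALG A s l r.+1.
Proof. exact: algRun_subS. Qed.

Variable x0 : U.

Lemma ALG_recE s l r : (0 < l <= #|U|)%N -> (0 < r)%N ->
  ALG A s l r =
    let j := nth x0 (arrival s) l.-1 in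
    if j \in A (prefixSet s l) then j |: ALG A s l.+1 r.-1 else ALG A s l.+1 r.
Proof.
case: l => [|l] //= lU; case: r => [|r] // _.
have ls : (l < size (arrival s))%N by rewrite size_map -cardT.
by rewrite /ALG /= (drop_nth x0) //= -take_nth.
Qed.

(* Left multiplication by this transposition exchanges the items arriving in
   rounds [i.+1] and [l]. *)
Definition round_swap (i l : nat) : {perm U} :=
  tperm (nth x0 (enum U) i) (nth x0 (enum U) l.-1).

Lemma arrival_mul (t s : {perm U}) :
  arrival (t * s)%g = map s (map t (enum U)).
Proof. by rewrite /arrival -map_comp; apply: eq_map => y; rewrite /= permM. Qed.

Section RoundSwap.
Variables (i l : nat).
Hypotheses (il : (i < l)%N) (lU : (l <= #|U|)%N).
Let e := enum U.
Let t := round_swap i l.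

Let in_take j : (j < l)%N -> nth x0 e j \in take l e.
Proof.
move=> jl; rewrite -(nth_take x0 jl); apply: mem_nth.
by rewrite size_takel // -cardT.
Qed.

Let notin_drop j : (j < l)%N -> nth x0 e j \notin drop l e.
Proof.
move=> /in_take; apply: contraL; move: (enum_uniq U).
by rewrite -/e -{1}(cat_take_drop l e) cat_uniq => /and3P[_ /hasPn H _] /H.
Qed.

Let lt_pred_l : (l.-1 < l)%N. Proof. by rewrite ltn_predL (leq_ltn_trans _ il). Qed.

Lemma prefixSet_round_swap s : prefixSet (t * s)%g l = prefixSet s l.
Proof.
apply/setP => y; rewrite !inE arrival_mul -!map_take.
by apply: eq_mem_map; rewrite map_take; apply: mem_map_tperm; apply: in_take.
Qed.

Lemma drop_arrival_round_swap s : drop l (arrival (t * s)%g) = drop l (arrival s).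
Proof.
by rewrite arrival_mul -!map_drop map_drop map_tperm_id //; apply: notin_drop.
Qed.

Lemma nth_arrival_round_swap s :
  nth x0 (arrival (t * s)%g) l.-1 = nth x0 (arrival s) i.
Proof.
have lt_e j : (j < l)%N -> (j < size (Finite.enum U))%N.
  by move=> jl; rewrite -enumT -cardT (leq_trans jl).
rewrite arrival_mul !(nth_map x0) ?size_map ?lt_e //.
by rewrite /t /round_swap -enumT tpermR.
Qed.

Lemma ALG_round_swap s r : (0 < r)%N ->
  ALG A (t * s)%g l r =
    let x := nth x0 (arrival s) i in
    if x \in A (prefixSet s l) then x |: ALG A s l.+1 r.-1 else ALG A s l.+1 r.
Proof.
move=> r0; have l0 : (0 < l <= #|U|)%N by rewrite lU (leq_ltn_trans _ il).
have ALG_succ r' : ALG A (t * s)%g l.+1 r' = ALG A s l.+1 r'.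
  by rewrite /ALG /= drop_arrival_round_swap; apply: algRun_eq_pre;
    apply: prefixSet_round_swap.
by rewrite ALG_recE //= nth_arrival_round_swap prefixSet_round_swap !ALG_succ.
Qed.

End RoundSwap.

Lemma uniq_take_arrival s l : uniq (take l (arrival s)).
Proof. by apply: take_uniq; rewrite map_inj_uniq ?enum_uniq //; apply: perm_inj. Qed.

Lemma card_prefixSet s l : (l <= #|U|)%N -> #|prefixSet s l| = l.
Proof.
move=> lU; rewrite cardsE; move/card_uniqP: (uniq_take_arrival s l) => ->.
by rewrite size_takel // size_map -cardT.
Qed.

Lemma sum_ALG_round_swap (V : nmodType) (v : {set U} -> V) s l r :
  (l <= #|U|)%N -> (0 < r)%N ->
  \sum_(0 <= i < l) v (ALG A (round_swap i l * s)%g l r) =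
  \sum_(x in prefixSet s l)
     (if x \in A (prefixSet s l) then v (x |: ALG A s l.+1 r.-1)
      else v (ALG A s l.+1 r)).
Proof.
move=> lU r0; set a := arrival s.
have sz : size (take l a) = l by rewrite size_takel // size_map -cardT.
rewrite (eq_bigl (mem (take l a))); last by move=> x; rewrite !inE.
rewrite -big_uniq ?uniq_take_arrival // (big_nth x0) sz.
apply: eq_big_nat => i /andP[_ il].
by rewrite ALG_round_swap //= nth_take //; case: ifP.
Qed.

End Run.

Lemma sum_translates (gT : finGroupType) (V : nmodType) (g : nat -> gT) n
    (f : gT -> V) :
  \sum_(x : gT) \sum_(0 <= i < n) f (g i * x)%g = (\sum_(x : gT) f x) *+ n.
Proof.
rewrite exchange_big /= -{2}(subn0 n) -sumr_const_nat.
by apply: eq_big_nat => i _; rewrite [RHS](reindex_inj (mulgI (g i))).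
Qed.

Section Expectation.
Variables (U : finType) (R : numFieldType).
Implicit Types f g : {perm U} -> R.

Lemma ExpD f g : Exp (fun s => f s + g s) = Exp f + Exp g.
Proof. by rewrite /Exp big_split mulrDl. Qed.

Lemma ExpZ c f : Exp (fun s => c * f s) = c * Exp f.
Proof. by rewrite /Exp -mulr_sumr mulrA. Qed.

Lemma ler_Exp f g : (forall s, f s <= g s) -> Exp f <= Exp g.
Proof.
by move=> fg; apply: ler_wpM2r; [rewrite invr_ge0 ler0n | exact: ler_sum].
Qed.

Lemma Exp_translates (t : nat -> {perm U}) n f :
  Exp (fun s => \sum_(0 <= i < n) f (t i * s)%g) = n%:R * Exp f.
Proof. by rewrite /Exp /= (sum_translates t) -[_ *+ n]mulr_natl mulrA. Qed.

End Expectation.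

Theorem mainTheorem3 (R : realFieldType) (U : finType) (k : nat)
  (v : {set U} -> R) (A : {set U} -> {set U}) (alpha : R)
  (hk : (1 <= k)%N)
  (v_nonneg : forall S : {set U}, 0 <= v S)
  (v_mono : forall S T : {set U}, S \subset T -> v S <= v T)
  (v_submod : forall S T : {set U}, v (S :|: T) + v (S :&: T) <= v S + v T)
  (halpha : 0 < alpha <= 1)
  (A_sub : forall L : {set U}, A L \subset L)
  (A_card : forall L : {set U}, (#|A L| <= k)%N)
  (A_approx : forall L T : {set U}, T \subset L -> (#|T| <= k)%N ->
                alpha * v T <= v (A L)) :
  forall l r : nat, (1 <= l <= #|U|)%N -> (1 <= r <= k)%N ->
    Exp (fun sigma => v (ALG A sigma l r)) >=
      (l%:R)^-1 *
        (Exp (fun sigma => v (A (prefixSet sigma l)))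
         + (k%:R - 1) * Exp (fun sigma => v (ALG A sigma l.+1 r.-1))
         + (l%:R - k%:R) * Exp (fun sigma => v (ALG A sigma l.+1 r))).
Proof.
move=> l r /andP[l0 lU] /andP[r0 _].
have /card_gt0P[x0 _] : (0 < #|U|)%N := leq_trans l0 lU.
pose t i := round_swap x0 i l.
pose F s := v (A (prefixSet s l)) + (k%:R - 1) * v (ALG A s l.+1 r.-1)
            + (l%:R - k%:R) * v (ALG A s l.+1 r).
have F_le s : F s <= \sum_(0 <= i < l) v (ALG A (t i * s)%g l r).
  have := sum_marginals_ge v_mono v_submod (A_sub (prefixSet s l)) (A_card _)
    (ALG_subS A s l.+1 r.-1).
  by rewrite prednK // card_prefixSet // -(sum_ALG_round_swap A x0).
have E_ALG : l%:R^-1 * Exp (fun s => \sum_(0 <= i < l) v (ALG A (t i * s)%g l r))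
             = Exp (fun s => v (ALG A s l r)).
  rewrite (Exp_translates t l (fun s => v (ALG A s l r))).
  by rewrite mulKf // pnatr_eq0 -lt0n.
have E_F : Exp (fun s => l%:R^-1 * F s) =
  l%:R^-1 * (Exp (fun s => v (A (prefixSet s l)))
             + (k%:R - 1) * Exp (fun s => v (ALG A s l.+1 r.-1))
             + (l%:R - k%:R) * Exp (fun s => v (ALG A s l.+1 r))).
  by rewrite ExpZ !ExpD !ExpZ.
rewrite -E_F -E_ALG -ExpZ; apply: ler_Exp => s.
by rewrite ler_wpM2l ?invr_ge0 ?ler0n.
Qed.
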